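(* Let $G$ be a group, $\partial$ an endomorphism of $G$, and $a,\sigma$ fixed elements of $G$. Write $\sigma_i=\partial^{i-1}(\sigma)$ and $a_i=\partial^{i-1}(a)$ for $i\ge1$, and let $H$ be the subgroup of $G$ generated by all $\sigma_i$ and $a_i$. Define $x*y=x\cdot\partial y\cdot\sigma\cdot\partial x^{-1}$ and $x\circ y=x\cdot\partial y\cdot a$. Then $(H,*,\circ)$ is an ALD-system if and only if the elements $\sigma_i,a_i$ satisfy the relations: $\sigma_j\sigma_i=\sigma_i\sigma_j$ and $a_j\sigma_i=\sigma_ia_j$ for $j\ge i+2$; $a_j\sigma_i=\sigma_{i+1}a_j$ and $a_ja_i=a_{i+1}a_j$ for $j\le i-1$; $\sigma_j\sigma_i\sigma_j=\sigma_i\sigma_j\sigma_i$, $\sigma_i\sigma_ja_i=a_j\sigma_i$ and $\sigma_j\sigma_ia_j=a_i\sigma_i$ for $j=i+1$ (i.e., if and only if $H$ is a homomorphic image of $B_\bullet$ via $\sigma_i\mapsto\sigma_i$, $a_i\mapsto a_i$).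
   Context: An ALD-system is a set with two binary operations $*,\circ$ satisfying $x*(y*z)=(x*y)*(x*z)$, $x*(y*z)=(x\circ y)*z$ and $x*(y\circ z)=(x*y)\circ(x*z)$. $B_\bullet$ denotes the group presented by generators $\sigma_1,\sigma_2,\dots,a_1,a_2,\dots$ and the relations listed in the claim. *)

Set Implicit Arguments.
Unset Strict Implicit.

Record Group := {
  gcar :> Type;
  gmul : gcar -> gcar -> gcar;
  ginv : gcar -> gcar;
  gone : gcar;
  gmulA : forall x y z, gmul x (gmul y z) = gmul (gmul x y) z;
  gmul1l : forall x, gmul gone x = x;
  gmul1r : forall x, gmul x gone = x;
  gmulVl : forall x, gmul (ginv x) x = gone;
  gmulVr : forall x, gmul x (ginv x) = gone
}.

Arguments gmul {g} _ _.
Arguments ginv {g} _.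
Arguments gone {g}.

Definition is_endo (G : Group) (d : G -> G) : Prop :=
  forall x y : G, d (gmul x y) = gmul (d x) (d y).

Definition idx (G : Group) (d : G -> G) (x : G) (i : nat) : G :=
  Nat.iter (i - 1) d x.

Inductive gen_sub (G : Group) (d : G -> G) (s a : G) : G -> Prop :=
  | gen_sig : forall i, 1 <= i -> gen_sub d s a (idx d s i)
  | gen_a : forall i, 1 <= i -> gen_sub d s a (idx d a i)
  | gen_one : gen_sub d s a gone
  | gen_mul : forall x y, gen_sub d s a x -> gen_sub d s a y -> gen_sub d s a (gmul x y)
  | gen_inv : forall x, gen_sub d s a x -> gen_sub d s a (ginv x).

Definition star (G : Group) (d : G -> G) (s : G) (x y : G) : G :=
  gmul (gmul (gmul x (d y)) s) (ginv (d x)).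

Definition circ (G : Group) (d : G -> G) (a : G) (x y : G) : G :=
  gmul (gmul x (d y)) a.

Definition is_ALD (T : Type) (P : T -> Prop) (op1 op2 : T -> T -> T) : Prop :=
  (forall x y, P x -> P y -> P (op1 x y)) /\
  (forall x y, P x -> P y -> P (op2 x y)) /\
  (forall x y z, P x -> P y -> P z ->
     op1 x (op1 y z) = op1 (op1 x y) (op1 x z) /\
     op1 x (op1 y z) = op1 (op2 x y) z /\
     op1 x (op2 y z) = op2 (op1 x y) (op1 x z)).

Definition B_relations (G : Group) (d : G -> G) (s a : G) : Prop :=
  let sg := idx d s in
  let al := idx d a in
  forall i j : nat, 1 <= i -> 1 <= j ->
    (i + 2 <= j ->
       gmul (sg j) (sg i) = gmul (sg i) (sg j) /\
       gmul (al j) (sg i) = gmul (sg i) (al j)) /\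
    (j <= i - 1 ->
       gmul (al j) (sg i) = gmul (sg (i + 1)) (al j) /\
       gmul (al j) (al i) = gmul (al (i + 1)) (al j)) /\
    (j = i + 1 ->
       gmul (gmul (sg j) (sg i)) (sg j) = gmul (gmul (sg i) (sg j)) (sg i) /\
       gmul (gmul (sg i) (sg j)) (al i) = gmul (al j) (sg i) /\
       gmul (gmul (sg j) (sg i)) (al j) = gmul (al i) (sg i)).

From Stdlib Require Import Lia PeanoNat.

(* Expanding the three ALD identities and cancelling the common outer factors
   x ∂y and (∂x)^-1 reduces them to equations between ∂²x, ∂²y, ∂²z, σ, a.
   At x = y = z = 1 they are the relations of B_• for (i, j) = (1, 2), and the
   identity x ∗ (y ∗ z) = (x ∘ y) ∗ z at (1, h, 1) and (1, 1, h) says that σ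
   commutes with ∂²h and that a ∂h = ∂²h a; conversely these five facts give
   the three identities on all of H.  The last two conditions cut out
   subgroups, so they hold on H iff they hold on the generators ∂^n σ, ∂^n a,
   where they are the remaining relations of B_• for i = 1 or j = 1.  Applying
   the endomorphism ∂^(i-1) moves every relation from index 1 to index i. *)

Local Notation "x ⋅ y" := (gmul x y) (at level 40, left associativity).
Local Notation "x ^-1" := (ginv x) (at level 3).

Section GroupFacts.

Context {G : Group}.
Implicit Types x y z r u t : G.

Lemma gmulKV x y : x ⋅ (x^-1 ⋅ y) = y.
Proof. now rewrite gmulA, gmulVr, gmul1l. Qed.

Lemma gmulK x y : x^-1 ⋅ (x ⋅ y) = y.
Proof. now rewrite gmulA, gmulVl, gmul1l. Qed.

Lemma gmulI x y z : x ⋅ y = x ⋅ z -> y = z.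
Proof. intro e. now rewrite <- (gmulK x y), e, gmulK. Qed.

Lemma gmulIr x y z : y ⋅ x = z ⋅ x -> y = z.
Proof.
  intro e. rewrite <- (gmul1r y), <- (gmul1r z), <- (gmulVr x), !gmulA.
  now rewrite e.
Qed.

Lemma ginvM x y : (x ⋅ y)^-1 = y^-1 ⋅ x^-1.
Proof. apply (gmulI (x ⋅ y)). now rewrite gmulVr, <- gmulA, gmulKV, gmulVr. Qed.

Lemma ginvK x : (x^-1)^-1 = x.
Proof. apply (gmulI (x^-1)). now rewrite gmulVr, gmulVl. Qed.

Lemma ginv1 : (@gone G)^-1 = gone.
Proof. now rewrite <- (gmul1l (gone^-1)), gmulVr. Qed.

Lemma gmul_solve_r {x y z} : x ⋅ z = y -> x = y ⋅ z^-1.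
Proof. intros <-. now rewrite <- gmulA, gmulVr, gmul1r. Qed.

Lemma gmulA_subst2 {x1 x2 y} : x1 ⋅ x2 = y -> forall r, x1 ⋅ (x2 ⋅ r) = y ⋅ r.
Proof. intros <- r. apply gmulA. Qed.

Lemma gmulA_subst3 {x1 x2 x3 y} : x1 ⋅ x2 ⋅ x3 = y -> forall r, x1 ⋅ (x2 ⋅ (x3 ⋅ r)) = y ⋅ r.
Proof. intros <- r. now rewrite !gmulA. Qed.

Lemma gmul_conj_inv {u p q} : u ⋅ p = q ⋅ u -> u ⋅ p^-1 = q^-1 ⋅ u.
Proof.
  intro e. apply (gmulI q). rewrite gmulKV, gmulA, <- e, <- gmulA.
  now rewrite gmulVr, gmul1r.
Qed.

Section Endomorphism.

Variable f : G -> G.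
Hypothesis f_endo : is_endo f.

Lemma endo1 : f gone = gone.
Proof. apply (gmulI (f gone)). now rewrite <- f_endo, !gmul1r. Qed.

Lemma endoV x : f (x^-1) = (f x)^-1.
Proof. apply (gmulI (f x)). now rewrite <- f_endo, !gmulVr, endo1. Qed.

Lemma iter_endo n : is_endo (Nat.iter n f).
Proof. induction n as [|n IH]; intros x y; simpl; now rewrite ?IH, ?f_endo. Qed.

End Endomorphism.

Lemma twisted_commute_mul u f g x y : is_endo f -> is_endo g ->
  u ⋅ f x = g x ⋅ u -> u ⋅ f y = g y ⋅ u -> u ⋅ f (x ⋅ y) = g (x ⋅ y) ⋅ u.
Proof.
  intros ef eg ex ey. rewrite ef, eg, gmulA, ex, <- !gmulA, ey. reflexivity.
Qed.

Lemma twisted_commute_inv u f g x : is_endo f -> is_endo g ->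
  u ⋅ f x = g x ⋅ u -> u ⋅ f (x^-1) = g (x^-1) ⋅ u.
Proof. intros ef eg ex. rewrite (endoV _ ef), (endoV _ eg). now apply gmul_conj_inv. Qed.

End GroupFacts.

Section ALD.

Variable G : Group.
Variable d : G -> G.
Hypothesis d_endo : is_endo d.
Variables s a : G.

Local Notation H := (gen_sub d s a).
Local Notation "x ⋆ y" := (star d s x y) (at level 40, left associativity).
Local Notation "x ∘ y" := (circ d a x y) (at level 40, left associativity).
Implicit Types x y z h : G.

#[local] Hint Rewrite d_endo (endoV _ d_endo) (endo1 _ d_endo) @ginvM @ginvK @ginv1
  @gmul1l @gmul1r @gmulKV @gmulK @gmulVr @gmulVl : group_simpl.
#[local] Hint Rewrite <- @gmulA : group_simpl.
Ltac group_simpl := autorewrite with group_simpl.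
Tactic Notation "group_simpl" "in" hyp(e) := autorewrite with group_simpl in e.

Lemma star_star x y z :
  x ⋆ (y ⋆ z) = x ⋅ d y ⋅ (d (d z) ⋅ d s ⋅ (d (d y))^-1 ⋅ s) ⋅ (d x)^-1.
Proof. unfold star. now group_simpl. Qed.

Lemma star_star_star x y z :
  (x ⋆ y) ⋆ (x ⋆ z) =
  x ⋅ d y ⋅ (s ⋅ d (d z) ⋅ d s ⋅ (d (d x))^-1 ⋅ s ⋅ d (d x) ⋅ (d s)^-1 ⋅ (d (d y))^-1) ⋅ (d x)^-1.
Proof. unfold star. now group_simpl. Qed.

Lemma circ_star x y z :
  (x ∘ y) ⋆ z = x ⋅ d y ⋅ (a ⋅ d z ⋅ s ⋅ (d a)^-1 ⋅ (d (d y))^-1) ⋅ (d x)^-1.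
Proof. unfold star, circ. now group_simpl. Qed.

Lemma star_circ x y z : x ⋆ (y ∘ z) = x ⋅ d y ⋅ (d (d z) ⋅ d a ⋅ s ⋅ (d x)^-1).
Proof. unfold star, circ. now group_simpl. Qed.

Lemma circ_star_star x y z :
  (x ⋆ y) ∘ (x ⋆ z) = x ⋅ d y ⋅ (s ⋅ d (d z) ⋅ d s ⋅ (d (d x))^-1 ⋅ a).
Proof. unfold star, circ. now group_simpl. Qed.

Definition ald_relations (Q : G -> Prop) : Prop :=
  d s ⋅ s ⋅ d s = s ⋅ d s ⋅ s /\
  s ⋅ d s ⋅ a = d a ⋅ s /\
  d s ⋅ s ⋅ d a = a ⋅ s /\
  (forall h, Q h -> s ⋅ d (d h) = d (d h) ⋅ s) /\
  (forall h, Q h -> a ⋅ d h = d (d h) ⋅ a).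

Lemma ald_relations_of_is_ALD : is_ALD H (star d s) (circ d a) -> ald_relations H.
Proof.
  intros [_ [_ ald]].
  pose proof (gen_one d s a) as H_one.
  assert (selfdistr : forall x y z, H x -> H y -> H z ->
    d (d z) ⋅ d s ⋅ (d (d y))^-1 ⋅ s =
    s ⋅ d (d z) ⋅ d s ⋅ (d (d x))^-1 ⋅ s ⋅ d (d x) ⋅ (d s)^-1 ⋅ (d (d y))^-1).
  { intros x y z hx hy hz. apply (gmulI (x ⋅ d y)), (gmulIr (d x)^-1).
    rewrite <- star_star, <- star_star_star. apply ald; assumption. }
  assert (circ_assoc : forall x y z, H x -> H y -> H z ->
    d (d z) ⋅ d s ⋅ (d (d y))^-1 ⋅ s = a ⋅ d z ⋅ s ⋅ (d a)^-1 ⋅ (d (d y))^-1).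
  { intros x y z hx hy hz. apply (gmulI (x ⋅ d y)), (gmulIr (d x)^-1).
    rewrite <- star_star, <- circ_star. apply ald; assumption. }
  assert (circ_distr : forall x y z, H x -> H y -> H z ->
    d (d z) ⋅ d a ⋅ s ⋅ (d x)^-1 = s ⋅ d (d z) ⋅ d s ⋅ (d (d x))^-1 ⋅ a).
  { intros x y z hx hy hz. apply (gmulI (x ⋅ d y)).
    rewrite <- star_circ, <- circ_star_star. apply ald; assumption. }
  assert (r2 : d s ⋅ s = a ⋅ s ⋅ (d a)^-1).
  { pose proof (circ_assoc _ _ _ H_one H_one H_one) as e. group_simpl in e. now group_simpl. }
  repeat split.
  - pose proof (selfdistr _ _ _ H_one H_one H_one) as e. group_simpl in e.
    rewrite e. now group_simpl.
  - pose proof (circ_distr _ _ _ H_one H_one H_one) as e. group_simpl in e.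
    rewrite e. now group_simpl.
  - rewrite r2. now group_simpl.
  - intros h hh. pose proof (circ_assoc _ _ _ H_one hh H_one) as e. group_simpl in e.
    rewrite (gmulA_subst3 (eq_sym r2)), <- gmulA in e. apply gmulI in e.
    rewrite <- (ginvK (d (d h))). apply gmul_conj_inv. now symmetry.
  - intros h hh. pose proof (circ_assoc _ _ _ H_one H_one hh) as e. group_simpl in e.
    rewrite r2, !gmulA in e. symmetry. now apply gmulIr, gmulIr in e.
Qed.

Lemma idx_S x n : idx d x (S n) = Nat.iter n d x.
Proof. unfold idx. simpl. now rewrite Nat.sub_0_r. Qed.

Lemma idx_succ x i : 1 <= i -> d (idx d x i) = idx d x (S i).
Proof. destruct i as [|i]; [inversion 1|]. intros _. now rewrite !idx_S. Qed.

Lemma gen_sub_endo h : H h -> H (d h).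
Proof.
  induction 1 as [i hi|i hi| |x y _ Hx _ Hy|x _ Hx].
  - rewrite idx_succ by assumption. constructor. auto.
  - rewrite idx_succ by assumption. constructor. auto.
  - rewrite (endo1 _ d_endo). constructor.
  - rewrite d_endo. now constructor.
  - rewrite (endoV _ d_endo). now constructor.
Qed.

Lemma gen_sub_star x y : H x -> H y -> H (x ⋆ y).
Proof.
  intros hx hy. unfold star.
  repeat apply gen_mul; auto using gen_inv, gen_sub_endo.
  exact (gen_sig d s a (le_n 1)).
Qed.

Lemma gen_sub_circ x y : H x -> H y -> H (x ∘ y).
Proof.
  intros hx hy. unfold circ.
  repeat apply gen_mul; auto using gen_sub_endo.
  exact (gen_a d s a (le_n 1)).
Qed.

Lemma is_ALD_of_ald_relations : ald_relations H -> is_ALD H (star d s) (circ d a).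
Proof.
  intros [braid [r1 [r2 [comm twist]]]].
  split; [exact gen_sub_star | split; [exact gen_sub_circ |]].
  intros x y z hx hy hz.
  specialize (comm y hy) as cy. apply gmul_conj_inv in cy.
  repeat split.
  - rewrite star_star, star_star_star. f_equal. f_equal. group_simpl.
    rewrite (gmulA_subst2 (comm x hx)). group_simpl.
    rewrite (gmulA_subst2 (comm z hz)). group_simpl.
    rewrite (gmulA_subst3 (eq_sym braid)). group_simpl.
    now rewrite cy.
  - rewrite star_star, circ_star. f_equal. f_equal.
    rewrite (twist z hz). group_simpl.
    rewrite (gmulA_subst3 (eq_sym (gmul_solve_r r2))). group_simpl.
    now rewrite cy.
  - rewrite star_circ, circ_star_star. f_equal. group_simpl.
    rewrite <- (gmul_conj_inv (twist x hx)), (gmulA_subst2 (comm z hz)). group_simpl.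
    rewrite (gmulA_subst3 r1). now group_simpl.
Qed.

Definition generator h : Prop := exists n, h = Nat.iter n d s \/ h = Nat.iter n d a.

Lemma gen_sub_generator h : generator h -> H h.
Proof.
  intros [n [-> | ->]]; rewrite <- idx_S; constructor; auto with arith.
Qed.

Lemma gen_sub_twisted_commute u f g : is_endo f -> is_endo g ->
  (forall h, generator h -> u ⋅ f h = g h ⋅ u) -> forall h, H h -> u ⋅ f h = g h ⋅ u.
Proof.
  intros ef eg gens h. induction 1 as [i hi|i hi| |x y _ Hx _ Hy|x _ Hx].
  - destruct i as [|i]; [inversion hi|]. rewrite idx_S. apply gens. exists i. now left.
  - destruct i as [|i]; [inversion hi|]. rewrite idx_S. apply gens. exists i. now right.
  - now rewrite (endo1 _ ef), (endo1 _ eg), gmul1l, gmul1r.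
  - now apply twisted_commute_mul.
  - now apply twisted_commute_inv.
Qed.

Lemma ald_relations_generator : ald_relations generator <-> ald_relations H.
Proof.
  pose proof (iter_endo _ d_endo 2) as dd_endo.
  split; intros [braid [r1 [r2 [comm twist]]]]; repeat split; try assumption.
  - exact (gen_sub_twisted_commute s (Nat.iter 2 d) (Nat.iter 2 d) dd_endo dd_endo comm).
  - exact (gen_sub_twisted_commute a d (Nat.iter 2 d) d_endo dd_endo twist).
  - intros h hh. now apply comm, gen_sub_generator.
  - intros h hh. now apply twist, gen_sub_generator.
Qed.

Lemma B_relations_of_ald_relations : ald_relations generator -> B_relations d s a.
Proof.
  intros [braid [r1 [r2 [comm twist]]]].
  unfold B_relations; cbv zeta. intros [|p] [|q] hi hj; try lia.
  rewrite Nat.add_1_r, !idx_S. split; [|split]; intro hij.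
  - assert (exists m, q = p + S (S m)) as [m ->] by (exists (q - p - 2); lia).
    rewrite !Nat.iter_add, <- !(iter_endo _ d_endo p).
    split; f_equal; symmetry; apply comm; exists m; auto.
  - assert (exists m, p = q + S m) as [m ->] by (exists (p - q - 1); lia).
    replace (S (q + S m)) with (q + S (S m)) by lia.
    rewrite !Nat.iter_add, <- !(iter_endo _ d_endo q).
    split; f_equal; apply twist; exists m; auto.
  - assert (q = S p) as -> by lia.
    rewrite Nat.iter_succ_r, Nat.iter_succ_r, <- !(iter_endo _ d_endo p).
    repeat split; f_equal; assumption.
Qed.

Lemma ald_relations_of_B_relations : B_relations d s a -> ald_relations generator.
Proof.
  unfold B_relations; cbv zeta. intro rels.
  destruct (rels 1 2 (le_n 1) ltac:(lia)) as [_ [_ braid_rels]].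
  destruct (braid_rels eq_refl) as [braid [r1 r2]].
  repeat split; [exact braid | exact r1 | exact r2 | |].
  - intros h [n [-> | ->]]; symmetry;
      destruct (rels 1 (3 + n) ltac:(lia) ltac:(lia)) as [far _];
      destruct (far ltac:(lia)); assumption.
  - intros h [n [-> | ->]];
      destruct (rels (2 + n) 1 ltac:(lia) ltac:(lia)) as [_ [near _]];
      destruct (near ltac:(lia)) as [ts ta];
      replace (2 + n + 1) with (3 + n) in ts, ta by lia; assumption.
Qed.

End ALD.

Theorem proposition2p12 (G : Group) (d : G -> G) (s a : G) :
  is_endo d ->
  (is_ALD (gen_sub d s a) (star d s) (circ d a) <-> B_relations d s a).
Proof.
  intro d_endo. split; intro h.
  - apply B_relations_of_ald_relations, ald_relations_generator,
      ald_relations_of_is_ALD; assumption.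
  - apply is_ALD_of_ald_relations, ald_relations_generator,
      ald_relations_of_B_relations; assumption.
Qed.
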